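(* Let $K\subset\mathbb{R}$ be a compact set with $\mathrm{conv}(K)=[a,b]$, and suppose there exists $\varepsilon>0$ such that $[a,a+\varepsilon]\cup[b-\varepsilon,b]\subset K$. Then there exists an index $\ell\in\mathbb{N}$, depending only on $\varepsilon$ and $b-a$, such that \[\frac{1}{2^\ell}\sum_{j=1}^{2^\ell}K=\frac{1}{2^{\ell+k}}\sum_{j=1}^{2^{\ell+k}}K\quad\text{for every }k\in\mathbb{N}.\] Moreover, $\ell$ increases with $b-a$ and decreases as $\varepsilon$ increases.
   Context: $\sum_{j=1}^N K$ denotes the Minkowski sum $K+\cdots+K$ ($N$ copies), where $X+Y=\{x+y:x\in X,y\in Y\}$, and $tX=\{tx:x\in X\}$. $\mathrm{conv}$ denotes convex hull. *)

From HB Require Import structures.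
From mathcomp Require Import all_boot all_order all_algebra.
From mathcomp Require Import all_classical all_reals all_analysis.
Set Implicit Arguments. Unset Strict Implicit. Unset Printing Implicit Defensive.
Import Order.TTheory GRing.Theory Num.Theory.
Local Open Scope classical_set_scope.
Local Open Scope ring_scope.

Definition msum (R : realType) (X Y : set R) : set R :=
  [set z | exists x, exists y, X x /\ Y y /\ z = x + y].

(* N-fold Minkowski sum K + ... + K (N copies); nsum K 0 = {0}
   (only N >= 1 is used in the statement). *)
Fixpoint nsum (R : realType) (K : set R) (n : nat) : set R :=
  match n with
  | O => [set 0]
  | S m => msum (nsum K m) K
  end.

Definition dil (R : realType) (t : R) (X : set R) : set R :=
  [set z | exists x, X x /\ z = t * x].

Definition convhull (R : realType) (K : set R) : set R :=
  [set z | exists (n : nat) (w p : 'I_n -> R),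
     (forall i, 0 <= w i) /\ \sum_(i < n) w i = 1 /\
     (forall i, K (p i)) /\ z = \sum_(i < n) w i * p i].

From Pilot Require
Import Defs.
From HB Require Import structures.
From mathcomp Require Import all_boot all_order all_algebra.
From mathcomp Require Import all_classical all_reals all_analysis.
From mathcomp Require Import lra.
(* Defs.msum must shadow the sum of measures [msum] of mathcomp-analysis. *)
Import Defs.
Import Order.TTheory GRing.Theory Num.Theory numFieldTopology.Exports numFieldNormedType.Exports.
Local Open Scope classical_set_scope.
Local Open Scope ring_scope.

(* Once (N + 1) e >= b - a, the N-fold sum of K is the whole interval
   [N a, N b]: a point of it is a sum of j points of [b - e, b] and N - j
   points of [a, a + e] for a suitable j, since these sums range over
   [N a + j (b - a - e), N a + j (b - a) + (N - j) e], and consecutive ranges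
   overlap.  Dividing by N gives [a, b] for every N = 2^m with m beyond
   floor((b - a) / e). *)

Section MinkowskiSums.
Context {R : realType}.
Implicit Types (K X Y : set R) (a b d e t : R).

Lemma sub_convhull K : K `<=` convhull K.
Proof.
move=> x Kx; exists 1%N, (fun=> 1), (fun=> x).
by rewrite !big_ord1 mul1r.
Qed.

Lemma msumS {X X' Y Y'} : X `<=` X' -> Y `<=` Y' -> msum X Y `<=` msum X' Y'.
Proof.
move=> XX' YY' _ [x [y [Xx [Yy ->]]]].
by exists x, y; split; [apply: XX'|split; [apply: YY'|]].
Qed.

Lemma nsumS n {X Y} : X `<=` Y -> nsum X n `<=` nsum Y n.
Proof. by move=> XY; elim: n => [|n IH] //=; apply: msumS. Qed.

Lemma nsumD K i j : msum (nsum K i) (nsum K j) `<=` nsum K (i + j).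
Proof.
elim: j => [|j IH] z [x [y [Kx [Kyj ->]]]].
  by move: Kyj => /= ->; rewrite addr0 addn0.
move: Kyj => [y' [k [Ky' [Kk ->]]]]; rewrite addnS addrA.
by exists (x + y'), k; split; [apply: IH; exists x, y'|].
Qed.

Lemma msum_itv a1 b1 a2 b2 : a1 <= b1 -> a2 <= b2 ->
  msum `[a1, b1]%classic `[a2, b2]%classic = `[a1 + a2, b1 + b2]%classic.
Proof.
move=> le_ab1 le_ab2; apply/seteqP; split => [_ [x [y [+ [+ ->]]]]|z].
  by rewrite /= !in_itv /= => /andP[? ?] /andP[? ?]; apply/andP; split; lra.
rewrite /= in_itv /= => /andP[z1 z2].
have [le_zb1|lt_b1z] := leP (z - a2) b1.
  exists (z - a2), a2; rewrite /= !in_itv /= lexx le_ab2.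
  by split; [apply/andP; split; lra|rewrite subrK].
exists b1, (z - b1); rewrite /= !in_itv /= lexx le_ab1.
by split=> //; split; [apply/andP; split; lra|rewrite addrC subrK].
Qed.

Lemma nsum_itv a b n : a <= b ->
  nsum `[a, b]%classic n = `[n%:R * a, n%:R * b]%classic.
Proof.
move=> le_ab; elim: n => [|n IH] /=; first by rewrite !mul0r set_itv1.
by rewrite IH msum_itv ?ler_wpM2l // -natr1 !mulrDl !mul1r.
Qed.

Lemma dil_itv t a b : 0 < t -> dil t `[a, b]%classic = `[t * a, t * b]%classic.
Proof.
move=> t_gt0; apply/seteqP; split => [_ [x [+ ->]]|z].
  by rewrite /= !in_itv /= !ler_pM2l.
rewrite /= in_itv /= => zab; exists (t^-1 * z).
have t_neq0 : t != 0 by rewrite gt_eqF.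
rewrite mulVKf //=; split => //; rewrite in_itv /=.
by rewrite -[a](mulKf t_neq0) -[b](mulKf t_neq0) !ler_pM2l ?invr_gt0.
Qed.

Lemma step_ranges_cover d e t N : 0 < e -> d <= N.+1%:R * e ->
  0 <= t <= N%:R * d ->
  exists2 j, (j <= N)%N & j%:R * (d - e) <= t <= j%:R * d + (N - j)%:R * e.
Proof.
move=> e_gt0 le_dNe /andP[t_ge0 le_tNd].
have N_ge0 : 0 <= N%:R :> R by [].
rewrite -natr1 in le_dNe.
have [le_de|lt_ed] := leP d e.
  by exists 0%N => //; rewrite !mul0r subn0 add0r t_ge0 /=; nra.
have de_gt0 : 0 < d - e by rewrite subr_gt0.
set m := Num.truncn (t / (d - e)).
have /andP[le_mt lt_tm] : m%:R <= t / (d - e) < m.+1%:R.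
  by apply: truncn_itv; rewrite divr_ge0 // ltW.
rewrite ler_pdivlMr // in le_mt; rewrite ltr_pdivrMr // -natr1 in lt_tm.
have [le_mN|lt_Nm] := leqP m N.
  by exists m => //; rewrite natrB // le_mt /=; nra.
exists N => //; rewrite subnn mul0r addr0 le_tNd andbT.
have : N.+1%:R <= m%:R :> R by rewrite ler_nat.
by rewrite -natr1; nra.
Qed.

Lemma nsum_eq_itv {K a b e N} : 0 < e ->
  K `<=` `[a, b]%classic -> `[a, a + e]%classic `|` `[b - e, b]%classic `<=` K ->
  b - a <= N.+1%:R * e ->
  nsum K N = `[N%:R * a, N%:R * b]%classic.
Proof.
move=> e_gt0 Kab Kends le_abNe.
have le_ab : a <= b.
  have /Kab : K a by apply: Kends; left; rewrite /= in_itv /= lexx lerDl ltW.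
  by rewrite /= in_itv /= => /andP[].
apply/seteqP; split; first by rewrite -nsum_itv //; apply: nsumS.
move=> x; rewrite /= in_itv /= => /andP[x1 x2].
have N_ge0 : 0 <= N%:R :> R by [].
have [j le_jN /andP[j1 j2]] :
    exists2 j, (j <= N)%N & j%:R * (b - a - e) <= x - N%:R * a
                             <= j%:R * (b - a) + (N - j)%:R * e.
  by apply: step_ranges_cover => //; apply/andP; split; nra.
have j_ge0 : 0 <= j%:R :> R by [].
have Nj_ge0 : 0 <= (N - j)%:R :> R by [].
rewrite -(subnKC le_jN); apply: nsumD.
have Kright : `[b - e, b]%classic `<=` K by move=> y ?; apply: Kends; right.
have Kleft : `[a, a + e]%classic `<=` K by move=> y ?; apply: Kends; left.
apply: (msumS (nsumS j Kright) (nsumS (N - j) Kleft)).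
have le_be : b - e <= b by lra.
have le_aae : a <= a + e by lra.
rewrite !nsum_itv // msum_itv ?ler_wpM2l //.
rewrite /= in_itv /= natrB // in j1 j2 *; apply/andP; split; nra.
Qed.
End MinkowskiSums.

Theorem lemma14 (R : realType) :
  exists L : R -> R -> nat,
    (* L depends only on eps and b - a; nondecreasing in b - a *)
    (forall (e d d' : R), 0 < e -> 0 < d -> d <= d' -> (L e d <= L e d')%N) /\
    (* nonincreasing in eps *)
    (forall (e e' d : R), 0 < e -> e <= e' -> 0 < d -> (L e' d <= L e d)%N) /\
    (forall (K : set R) (a b e : R),
       compact K ->
       convhull K = `[a, b]%classic ->
       0 < e ->
       `[a, a + e]%classic `|` `[b - e, b]%classic `<=` K ->
       forall k : nat,
         dil (2 ^+ L e (b - a))^-1 (nsum K (2 ^ L e (b - a))) =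
         dil (2 ^+ (L e (b - a) + k))^-1 (nsum K (2 ^ (L e (b - a) + k)))).
Proof.
exists (fun e d => Num.truncn (d / e)); split; [|split].
- by move=> e d d' e_gt0 _ le_dd'; apply: le_truncn; rewrite ler_pM2r ?invr_gt0.
- move=> e e' d e_gt0 le_ee' d_gt0; apply: le_truncn.
  by rewrite ler_pM2l // lef_pV2 ?posrE // (lt_le_trans e_gt0).
move=> K a b e _ hull_ab e_gt0 Kends k.
set l := Num.truncn ((b - a) / e).
have Kab : K `<=` `[a, b]%classic by rewrite -hull_ab; apply: sub_convhull.
have avg_itv m : (l <= m)%N -> dil (2 ^+ m)^-1 (nsum K (2 ^ m)) = `[a, b]%classic.
  move=> le_lm; have pow_gt0 : 0 < (2 ^ m)%:R :> R by rewrite ltr0n expn_gt0.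
  have le_ab_pow : b - a <= (2 ^ m).+1%:R * e.
    have : (b - a) / e < l.+1%:R by apply: truncnS_gt.
    rewrite ltr_pdivrMr // => /ltW /le_trans; apply; rewrite ler_pM2r // ler_nat.
    by rewrite ltnS (leq_trans le_lm) // ltnW // ltn_expl.
  rewrite -natrX (nsum_eq_itv e_gt0 Kab Kends le_ab_pow) // dil_itv ?invr_gt0 //.
  by rewrite !mulKf ?gt_eqF.
by rewrite !avg_itv // leq_addr.
Qed.
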